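(* Let $\Theta$ be a saturated branch of a tableau of $\mathbf{TAB}_{\mathbf{IB}}$ and let $i$ be a quasi-urfather on $\Theta$. If $i\prec_\Theta j$, then $j\in\mathrm{dom}(v_\Theta)$.
   Context: Hybrid language: fix disjoint countably infinite sets $\mathbf{Prop}$ (propositional variables) and $\mathbf{Nom}$ (nominals). Formulas: $\varphi ::= p \mid i \mid \neg\varphi \mid \varphi\land\varphi \mid \Diamond\varphi \mid @_i\varphi$ with $p\in\mathbf{Prop}$, $i\in\mathbf{Nom}$; $\Box\varphi$ abbreviates $\neg\Diamond\neg\varphi$. Tableau calculus $\mathbf{TAB}_{\mathbf{IB}}$. A tableau is a well-founded tree whose nodes are formulas of the form $@_i\varphi$; its root is a formula $@_i\varphi$ (the root formula) where $i$ does not occur in $\varphi$. A branch is a maximal path; $\varphi\in\Theta$ means $\varphi$ occurs on branch $\Theta$. Each branch is extended by applying the rules below to its formulas as often as possible, except that no further formula is added to a branch once either (i) every new formula generated by applying any rule already occurs on the branch, or (ii) the branch is closed, i.e. contains $@_i\varphi$ and $@_i\neg\varphi$ for some formula $\varphi$ and nominal $i$. A branch is saturated if every new formula generated by applying some rule already occurs on it. An accessibility formula is a formula $@_i\Diamond j$ added by rule $[\Diamond]$ (with $j$ the new nominal). Rules (premises already on the branch; conclusions added to it): [$\neg\neg$] from $@_i\neg\neg\varphi$ add $@_i\varphi$; [$\land$] from $@_i(\varphi\land\psi)$ add $@_i\varphi$ and $@_i\psi$; [$\neg\land$] from $@_i\neg(\varphi\land\psi)$ split the branch into one extended by $@_i\neg\varphi$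 and one extended by $@_i\neg\psi$; [$\Diamond$] from $@_i\Diamond\varphi$, which is not an accessibility formula, add $@_i\Diamond j$ and $@_j\varphi$ where $j$ is a nominal not occurring on the branch; this rule is applied at most once per formula, and only if $i$ is a quasi-urfather on the branch (defined below); [$\neg\Diamond$] from $@_i\neg\Diamond\varphi$ and $@_i\Diamond j$ add $@_j\neg\varphi$; [$\Box_{sym}$] from $@_i\Box\varphi$ and $@_j\Diamond i$ add $@_j\varphi$; [$@$] from $@_i@_j\varphi$ add $@_j\varphi$; [$\neg@$] from $@_i\neg@_j\varphi$ add $@_j\neg\varphi$; [$Id$] from $@_i\varphi$, which is not an accessibility formula, and $@_i j$ add $@_j\varphi$; [$Ref$] for any nominal $i$ occurring on the branch add $@_i i$; ($\mathcal{I}$) for any nominal $i$ occurring on the branch add $@_i\neg\Diamond i$. Auxiliary notions for a branch $\Theta$. $@_i\varphi$ is a quasi-subformula of $@_j\psi$ if $\varphi$ is a subformula of $\psi$, or $\varphi=\neg\chi$ with $\chi$ a subformula of $\psi$. For a nominal $i$ occurring in $\Theta$, $T^\Theta(i)=\{\varphi \mid @_i\varphi\in\Theta$ and $@_i\varphi$ is a quasi-subformula of the root formula$\}$. Nominals $i,j$ are twins if $T^\Theta(i)=T^\Theta(j)$. $i\prec_\Theta j$ if $j$ was introduced by applying $[\Diamond]$ to a formula $@_i\Diamond\varphi$ (equivalently, the accessibility formula $@_i\Diamond j$ is in $\Theta$); $\prec_\Theta^*$ is its reflexive transitive closure. A nominal $i$ is a quasi-urfather on $\Theta$ if there are no twins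 $j\neq k$ with $j\prec_\Theta^* i$ and $k\prec_\Theta^* i$. The identity urfather $v_\Theta(i)$ of a nominal $i$ occurring in $\Theta$ is the earliest introduced nominal $j$ on $\Theta$ such that $j$ is a twin of $i$ and $j$ is a quasi-urfather; it may fail to exist, and $\mathrm{dom}(v_\Theta)$ denotes the set of nominals $i$ for which it exists. *)

From Stdlib Require Import List Arith Relations.
Import ListNotations.

Inductive form : Type :=
  | PVar : nat -> form
  | Nom  : nat -> form
  | Neg  : form -> form
  | And  : form -> form -> form
  | Dia  : form -> form
  | At   : nat -> form -> form.

Definition Box (f : form) : form := Neg (Dia (Neg f)).

Fixpoint noms (f : form) : list nat :=
  match f with
  | PVar _ => []
  | Nom i => [i]
  | Neg g => noms g
  | And g h => noms g ++ noms h
  | Dia g => noms g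
  | At i g => i :: noms g
  end.

Inductive subf : form -> form -> Prop :=
  | subf_refl f : subf f f
  | subf_neg f g : subf f g -> subf f (Neg g)
  | subf_andl f g h : subf f g -> subf f (And g h)
  | subf_andr f g h : subf f h -> subf f (And g h)
  | subf_dia f g : subf f g -> subf f (Dia g)
  | subf_at f i g : subf f g -> subf f (At i g).

(* A node of a branch: the formula @_i phi, written (i, phi, tag).
   tag = Some chi  iff this node is an accessibility formula @_i <> j
   added by rule [<>] applied to the premise @_i <> chi;
   tag = None otherwise. *)
Definition entry : Type := (nat * form * option form)%type.

Definition on (Th : list entry) (i : nat) (f : form) : Prop :=
  exists t, In (i, f, t) Th.

Definition on_nonacc (Th : list entry) (i : nat) (f : form) : Prop :=
  In (i, f, None) Th.

Definition entry_has_nom (n : nat) (e : entry) : bool :=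
  match e with (i, f, _) => Nat.eqb n i || existsb (Nat.eqb n) (noms f) end.

Definition occurs (Th : list entry) (n : nat) : Prop :=
  exists e, In e Th /\ entry_has_nom n e = true.

(* position (in order of addition) of the first node of Theta in which n occurs;
   nominals are "introduced" in this order *)
Fixpoint first_occ (n : nat) (Th : list entry) : nat :=
  match Th with
  | [] => 0
  | e :: t => if entry_has_nom n e then 0 else S (first_occ n t)
  end.

Definition closed (Th : list entry) : Prop :=
  exists i f, on Th i f /\ on Th i (Neg f).

Definition prec (Th : list entry) (i j : nat) : Prop :=
  exists chi, In (i, Dia (Nom j), Some chi) Th.

Definition prec_star (Th : list entry) : nat -> nat -> Prop :=
  clos_refl_trans nat (prec Th).

Definition quasi_sub (psi f : form) : Prop :=
  subf f psi \/ exists chi, f = Neg chi /\ subf chi psi.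

Definition Tset (psi : form) (Th : list entry) (i : nat) (f : form) : Prop :=
  on Th i f /\ quasi_sub psi f.

Definition twins (psi : form) (Th : list entry) (j k : nat) : Prop :=
  occurs Th j /\ occurs Th k /\ (forall f, Tset psi Th j f <-> Tset psi Th k f).

Definition quasi_urfather (psi : form) (Th : list entry) (i : nat) : Prop :=
  ~ (exists j k, j <> k /\ twins psi Th j k /\ prec_star Th j i /\ prec_star Th k i).

Definition identity_urfather (psi : form) (Th : list entry) (i j : nat) : Prop :=
  twins psi Th i j /\ quasi_urfather psi Th j /\
  (forall k, twins psi Th i k -> quasi_urfather psi Th k ->
     first_occ j Th <= first_occ k Th).

Definition in_dom_v (psi : form) (Th : list entry) (i : nat) : Prop :=
  exists j, identity_urfather psi Th i j.

(* rule_app psi Th alts : some rule of TAB_IB is applicable to the branch Th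
   (root formula @_r psi) and yields the alternatives alts (one list of new
   nodes per resulting branch; only [~/\] has two alternatives). *)
Inductive rule_app (psi : form) (Th : list entry) : list (list entry) -> Prop :=
  | R_negneg i f : on Th i (Neg (Neg f)) ->
      rule_app psi Th [[(i, f, None)]]
  | R_and i f g : on Th i (And f g) ->
      rule_app psi Th [[(i, f, None); (i, g, None)]]
  | R_negand i f g : on Th i (Neg (And f g)) ->
      rule_app psi Th [[(i, Neg f, None)]; [(i, Neg g, None)]]
  | R_dia i f j : on_nonacc Th i (Dia f) ->
      quasi_urfather psi Th i ->
      ~ occurs Th j ->
      ~ (exists k, In (i, Dia (Nom k), Some f) Th) ->
      rule_app psi Th [[(i, Dia (Nom j), Some f); (j, f, None)]]
  | R_negdia i f j : on Th i (Neg (Dia f)) -> on Th i (Dia (Nom j)) ->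
      rule_app psi Th [[(j, Neg f, None)]]
  | R_boxsym i f j : on Th i (Box f) -> on Th j (Dia (Nom i)) ->
      rule_app psi Th [[(j, f, None)]]
  | R_at i j f : on Th i (At j f) ->
      rule_app psi Th [[(j, f, None)]]
  | R_negat i j f : on Th i (Neg (At j f)) ->
      rule_app psi Th [[(j, Neg f, None)]]
  | R_id i j f : on_nonacc Th i f -> on Th i (Nom j) ->
      rule_app psi Th [[(j, f, None)]]
  | R_ref i : occurs Th i ->
      rule_app psi Th [[(i, Nom i, None)]]
  | R_irr i : occurs Th i ->
      rule_app psi Th [[(i, Neg (Dia (Nom i)), None)]].

(* saturated: every new formula generated by applying some rule already occurs
   on the branch (for the branching rule: the formulas of one of the
   alternatives; an applicable [<>] always generates a new nominal, so
   saturation requires [<>] to be no longer applicable). *)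
Definition saturated (psi : form) (Th : list entry) : Prop :=
  forall alts, rule_app psi Th alts ->
    exists B, In B alts /\ forall i f t, In (i, f, t) B -> on Th i f.

(* bs is the sequence of blocks of nodes along a branch of a tableau with root
   formula @_r psi: the first block is the root, every later block is the
   conclusion (one alternative) of a rule applied to the part of the branch
   built so far, and no rule is applied to a closed or saturated branch. *)
Definition tableau_branch_blocks (r : nat) (psi : form) (bs : list (list entry)) : Prop :=
  ~ In r (noms psi) /\
  nth 0 bs [] = [(r, psi, None)] /\
  1 <= length bs /\
  forall k, 1 <= k < length bs ->
    let pre := concat (firstn k bs) in
    ~ closed pre /\ ~ saturated psi pre /\
    exists alts, rule_app psi pre alts /\ In (nth k bs []) alts.

Definition tableau_branch (r : nat) (psi : form) (Th : list entry) : Prop :=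
  exists bs, tableau_branch_blocks r psi bs /\ Th = concat bs.

(* A nominal j with i <_Θ j is created by a single application of [<>], with j
   fresh, so i is its only parent and every proper ancestor of j is an ancestor
   of i.  If j is not itself a quasi-urfather, two distinct ancestors of j are twins;
   as i is a quasi-urfather, one of them must be j and the other an ancestor of
   i, hence a quasi-urfather twin of j.  An earliest introduced quasi-urfather
   twin of j is then v_Θ(j). *)

From Stdlib Require Import List Arith Relations Classical Lia Bool Wf_nat.
Import ListNotations.

Lemma occurs_acc Th p j t :
  In (p, Dia (Nom j), t) Th -> occurs Th j.
Proof.
  intros H. exists (p, Dia (Nom j), t). split; [exact H|].
  simpl. rewrite Nat.eqb_refl. apply orb_true_r.
Qed.

Lemma rule_app_acc_fresh psi pre alts B p j c :
  rule_app psi pre alts -> In B alts -> In (p, Dia (Nom j), Some c) B ->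
  ~ occurs pre j /\ forall q c', In (q, Dia (Nom j), Some c') B -> q = p.
Proof.
  intros R HB HI.
  destruct R; simpl in HB;
    repeat (destruct HB as [HB|HB]; [subst B|]); try contradiction;
    simpl in HI; repeat (destruct HI as [HI|HI]; [try discriminate|]); try contradiction.
  injection HI as -> -> ->. split; [assumption|].
  intros q c' H'. destruct H' as [H'|[H'|[]]]; congruence.
Qed.

Definition unique_prec (Th : list entry) : Prop :=
  forall p p' j, prec Th p j -> prec Th p' j -> p = p'.

Lemma unique_prec_rule_app psi pre alts B :
  unique_prec pre -> rule_app psi pre alts -> In B alts -> unique_prec (pre ++ B).
Proof.
  intros U R HB p p' j [c A] [c' A'].
  apply in_app_or in A; apply in_app_or in A'.
  destruct A as [A|A], A' as [A'|A'].
  - eapply U; eexists; eauto.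
  - exfalso. eapply (rule_app_acc_fresh _ _ _ _ _ _ _ R HB A'), occurs_acc, A.
  - exfalso. eapply (rule_app_acc_fresh _ _ _ _ _ _ _ R HB A), occurs_acc, A'.
  - symmetry. eapply (rule_app_acc_fresh _ _ _ _ _ _ _ R HB A), A'.
Qed.

Lemma firstn_S_app_nth {A} (l : list A) n d : n < length l ->
  firstn (S n) l = firstn n l ++ [nth n l d].
Proof.
  revert n; induction l as [|a l IH]; intros n H; simpl in *; [lia|].
  destruct n; simpl; [reflexivity|]. rewrite <- IH by lia. reflexivity.
Qed.

Lemma tableau_branch_unique_prec r psi Th :
  tableau_branch r psi Th -> unique_prec Th.
Proof.
  intros [bs [[_ [Hroot [_ Hstep]]] ->]].
  assert (Hpre : forall n, n <= length bs -> unique_prec (concat (firstn n bs))).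
  { induction n as [|n IH]; intros Hn.
    - intros p p' j [c []].
    - rewrite (firstn_S_app_nth bs n []), concat_app by lia. simpl. rewrite app_nil_r.
      destruct n as [|n].
      + rewrite Hroot. intros p p' j [c [A|[]]]. discriminate.
      + destruct (Hstep (S n) ltac:(lia)) as [_ [_ [alts [R HB]]]].
        eapply unique_prec_rule_app; eauto. apply IH. lia. }
  rewrite <- (firstn_all bs). apply Hpre. lia.
Qed.

Lemma prec_star_unique_parent Th i j a :
  unique_prec Th -> prec Th i j -> prec_star Th a j -> a = j \/ prec_star Th a i.
Proof.
  intros U Hij H. apply clos_rt_rtn1 in H.
  destruct H as [|p q Hp Hr]; [left; reflexivity|right].
  rewrite (U _ _ _ Hij Hp). apply clos_rtn1_rt, Hr.
Qed.

Lemma quasi_urfather_prec_star psi Th i k :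
  quasi_urfather psi Th i -> prec_star Th k i -> quasi_urfather psi Th k.
Proof.
  intros Q Hki [x [y [Nxy [Txy [Hx Hy]]]]]. apply Q.
  exists x, y. split; [|split; [|split]]; try assumption; eapply rt_trans; eauto.
Qed.

Lemma twins_sym psi Th a b : twins psi Th a b -> twins psi Th b a.
Proof. intros [A [B C]]. split; [|split]; auto. intros f. symmetry. apply C. Qed.

Lemma twins_refl psi Th a : occurs Th a -> twins psi Th a a.
Proof. intros A. split; [|split]; tauto. Qed.

Lemma prec_child_quasi_urfather_twin psi Th i j :
  unique_prec Th -> quasi_urfather psi Th i -> prec Th i j ->
  exists k, twins psi Th j k /\ quasi_urfather psi Th k.
Proof.
  intros U Q Hij.
  assert (Hj : occurs Th j) by (destruct Hij as [c Hc]; eapply occurs_acc, Hc).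
  destruct (classic (quasi_urfather psi Th j)) as [Qj|NQj].
  { exists j. split; [apply twins_refl|]; assumption. }
  apply NNPP in NQj. destruct NQj as [a [b [Nab [Tab [Ha Hb]]]]].
  destruct (prec_star_unique_parent _ _ _ _ U Hij Ha) as [->|Ha'],
           (prec_star_unique_parent _ _ _ _ U Hij Hb) as [->|Hb'].
  - contradiction.
  - exists b. split; [assumption|]. eapply quasi_urfather_prec_star; eauto.
  - exists a. split; [apply twins_sym; assumption|].
    eapply quasi_urfather_prec_star; eauto.
  - exfalso. apply Q. exists a, b. auto.
Qed.

Lemma in_dom_v_of_twin psi Th j :
  (exists k, twins psi Th j k /\ quasi_urfather psi Th k) -> in_dom_v psi Th j.
Proof.
  intros [k Hk].
  set (P n := exists k, (twins psi Th j k /\ quasi_urfather psi Th k) /\ first_occ k Th = n).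
  destruct (dec_inh_nat_subset_has_unique_least_element P (fun n => classic (P n)))
    as [n [[[m [[Tm Qm] <-]] Least] _]]; [exists (first_occ k Th), k; auto|].
  exists m. split; [exact Tm|split; [exact Qm|]].
  intros k' Tk' Qk'. apply Least. exists k'. auto.
Qed.

Theorem lemma6 (r : nat) (psi : form) (Th : list entry) (i j : nat) :
  tableau_branch r psi Th ->
  saturated psi Th ->
  quasi_urfather psi Th i ->
  prec Th i j ->
  in_dom_v psi Th j.
Proof.
  intros TB _ Qi Hij.
  apply in_dom_v_of_twin.
  eapply prec_child_quasi_urfather_twin; eauto.
  eapply tableau_branch_unique_prec; eauto.
Qed.
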